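(* Let $A\in\mathbb{C}^{n\times n}$, and fix $A^-\in A\{1\}$ and $A^{GD}\in A\{GD\}$. Then $A^{GD}AA^{-}$ is the $(A^{GD}A,\,AA^{-})$-inverse of $A$.
   Context: For $A\in\mathbb{C}^{n\times n}$, $ind(A)$ is the smallest nonnegative integer $k$ with $\mathrm{rank}(A^k)=\mathrm{rank}(A^{k+1})$. $A\{1\}$ is the set of matrices $X$ with $AXA=A$. With $k=ind(A)$, $A\{GD\}$ is the set of G-Drazin inverses of $A$: matrices $X$ with $AXA=A$, $XA^{k+1}=A^k$, $A^{k+1}X=A^k$. For $A,B,C\in\mathbb{C}^{n\times n}$, a matrix $X\in\mathbb{C}^{n\times n}$ is the $(B,C)$-inverse of $A$ if $XAB=B$, $CAX=C$, $N(C)\subseteq N(X)$ and $R(X)\subseteq R(B)$ (such $X$, if it exists, is unique); $R(\cdot)$, $N(\cdot)$ denote range and null space. *)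

From HB Require Import structures.
From mathcomp Require Import all_boot all_order all_algebra.
From mathcomp Require Import complex.
Set Implicit Arguments. Unset Strict Implicit. Unset Printing Implicit Defensive.
Import Order.TTheory GRing.Theory Num.Theory.
Local Open Scope ring_scope.

(* Complex matrices: 'M[R[i]]_n for R a real closed field (R = reals gives C). *)

(* ind(A): smallest k with rank(A^k) = rank(A^(k+1)); such k always exists
   and is <= n, so searching k in 0..n is exact. *)
Definition ind (F : fieldType) (n : nat) (A : 'M[F]_n) : nat :=
  find (fun k => \rank (A ^+ k) == \rank (A ^+ k.+1)) (iota 0 n.+1).

Definition inner_inverse (F : fieldType) (n : nat) (A X : 'M[F]_n) : Prop :=
  A *m X *m A = A.

Definition GD_inverse (F : fieldType) (n : nat) (A X : 'M[F]_n) : Prop :=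
  let k := ind A in
  [/\ A *m X *m A = A, X *m A ^+ k.+1 = A ^+ k & A ^+ k.+1 *m X = A ^+ k].

Definition range_sub (F : fieldType) (n : nat) (X B : 'M[F]_n) : Prop :=
  forall v : 'cV[F]_n, exists w : 'cV[F]_n, X *m v = B *m w.

Definition null_sub (F : fieldType) (n : nat) (C X : 'M[F]_n) : Prop :=
  forall v : 'cV[F]_n, C *m v = 0 -> X *m v = 0.

Definition BC_inverse (F : fieldType) (n : nat) (A B C X : 'M[F]_n) : Prop :=
  [/\ X *m A *m B = B, C *m A *m X = C, null_sub C X & range_sub X B].

From HB Require Import structures.
From mathcomp Require Import all_boot all_order all_algebra.
From mathcomp Require Import complex.
Local Open Scope ring_scope.

(* Only the inner-inverse property of A^GD is needed: for any X, Y in A{1},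
   absorbing A Y A = A and A X A = A gives (XAY) A (XA) = XA and
   (AY) A (XAY) = AY, while XAY = X (AY) = (XA) Y yields the null-space and
   range inclusions. *)

Lemma GD_inverse_inner (F : fieldType) (n : nat) (A X : 'M[F]_n) :
  GD_inverse A X -> inner_inverse A X.
Proof. by case. Qed.

Lemma range_sub_mulmx (F : fieldType) (n : nat) (B C : 'M[F]_n) :
  range_sub (B *m C) B.
Proof. by move=> v; exists (C *m v); rewrite mulmxA. Qed.

Lemma null_sub_mulmx (F : fieldType) (n : nat) (B C : 'M[F]_n) :
  null_sub C (B *m C).
Proof. by move=> v Cv0; rewrite -mulmxA Cv0 mulmx0. Qed.

Lemma BC_inverse_inner_inverses (F : fieldType) (n : nat) (A X Y : 'M[F]_n) :
  inner_inverse A X -> inner_inverse A Y ->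
  BC_inverse A (X *m A) (A *m Y) (X *m A *m Y).
Proof.
rewrite /inner_inverse => AXA AYA.
have XAYA : X *m A *m Y *m A = X *m A by rewrite -!mulmxA [A *m _]mulmxA AYA.
have AXAY : A *m (X *m A *m Y) = A *m Y by rewrite !mulmxA AXA.
split.
- by rewrite XAYA -mulmxA [A *m _]mulmxA AXA.
- by rewrite -mulmxA AXAY mulmxA AYA.
- by rewrite -mulmxA; apply: null_sub_mulmx.
- exact: range_sub_mulmx.
Qed.

Theorem theorem2p10 (R : rcfType) (n : nat) (A Am AGD : 'M[R[i]]_n) :
  inner_inverse A Am -> GD_inverse A AGD ->
  BC_inverse A (AGD *m A) (A *m Am) (AGD *m A *m Am).
Proof.
move=> Am_inner /GD_inverse_inner AGD_inner.
exact: BC_inverse_inner_inverses.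
Qed.
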